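(* Assume $G$ is connected. Let $S_n\subset V$ be nonempty with $S_n\ne V$, let $\delta t>0$ and $m>0$, and let $\mathcal V_m=\{u\in\mathcal V:-m\le u_i\le m\ \forall i\}$. Let $$F(u)=\mathrm{TV}^q_a(u)+\frac1{\delta t}\langle u,sd^{\Sigma_n}\rangle_{\mathcal V}.$$ Then $F$ has a minimizer over $\mathcal V_m$. Moreover, for every minimizer $u$ of $F$ over $\mathcal V_m$ and every $s\in(-m,m)$, the superlevel set $E(s)=\{i\in V:u_i>s\}$ minimizes $\hat S\mapsto\mathcal F(\hat S,S_n)$ over all subsets $\hat S\subset V$, where $$\mathcal F(\hat S,S_n)=\mathrm{TV}^q_a(\chi_{\hat S})-\mathrm{TV}^q_a(\chi_{S_n})+\frac1{\delta t}\big\langle\chi_{\hat S}-\chi_{S_n},(\chi_{\hat S}-\chi_{S_n})\,d^{\Sigma_n}\big\rangle_{\mathcal V}.$$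
   Context: $G=(V,E)$ is a finite undirected weighted graph with vertex set $V=\{1,\dots,n\}$. The weights satisfy $\omega_{ij}=\omega_{ji}\ge0$, with $\omega_{ij}>0$ iff $\{i,j\}\in E$, and $\omega_{ii}=0$. The degrees are $d_i=\sum_j\omega_{ij}>0$. Parameters $r\in[0,1]$ and $q\in[1/2,1]$ are fixed, and $\omega_{ij}^q:=0$ when $\omega_{ij}=0$. $\mathcal V$ is the space of functions $V\to\mathbb R$ with $\langle u,v\rangle_{\mathcal V}=\sum_iu_iv_id_i^r$, and $\chi_S$ is the indicator of $S$. The anisotropic total variation is $\mathrm{TV}^q_a(u)=\frac12\sum_{i,j}\omega_{ij}^q|u_i-u_j|$. Graph distance: each edge $\{i,j\}$ with $\omega_{ij}>0$ has length $\omega_{ij}^{q-1}$. The distance $d^G_{ij}$ is the minimal total length of a path from $i$ to $j$, with $d^G_{ii}=0$. For nonempty $T\subset V$, $d^T_i=\min_{j\in T}d^G_{ij}$. $\Sigma_n$ is the set of nodes incident to some edge $\{i,j\}$ with $\omega_{ij}>0$, $i\in S_n$, $j\notin S_n$. The signed distance is $sd^{\Sigma_n}=(\chi_{V\setminus S_n}-\chi_{S_n})\,d^{\Sigma_n}$ (pointwise product). *)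

From Stdlib Require Import Reals List Classical ClassicalEpsilon.
Open Scope R_scope.

(* Vertices are 0..n-1 (the paper's 1..n shifted by one).
   Weights: w : nat -> nat -> R, only values on 0..n-1 matter. *)

Definition sumV (n : nat) (f : nat -> R) : R :=
  fold_right Rplus 0 (map f (seq 0 n)).

Definition deg (n : nat) (w : nat -> nat -> R) (i : nat) : R :=
  sumV n (fun j => w i j).

(* omega_ij^q, with the convention omega^q := 0 when omega = 0 *)
Definition wpow (w : nat -> nat -> R) (q : R) (i j : nat) : R :=
  if Rlt_dec 0 (w i j) then Rpower (w i j) q else 0.

Definition TVa (n : nat) (w : nat -> nat -> R) (q : R) (u : nat -> R) : R :=
  / 2 * sumV n (fun i => sumV n (fun j => wpow w q i j * Rabs (u i - u j))).

Definition innerV (n : nat) (w : nat -> nat -> R) (r : R) (u v : nat -> R) : R :=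
  sumV n (fun i => u i * v i * Rpower (deg n w i) r).

(* indicator of a subset S (subsets of V are boolean predicates on nat) *)
Definition chi (S : nat -> bool) (i : nat) : R := if S i then 1 else 0.

(* walks: p lists the vertices visited after the start x; each step is an edge *)
Fixpoint is_walk (n : nat) (w : nat -> nat -> R) (x : nat) (p : list nat) : Prop :=
  match p with
  | nil => True
  | y :: p' => (y < n)%nat /\ 0 < w x y /\ is_walk n w y p'
  end.

Fixpoint walk_len (w : nat -> nat -> R) (q : R) (x : nat) (p : list nat) : R :=
  match p with
  | nil => 0
  | y :: p' => Rpower (w x y) (q - 1) + walk_len w q y p'
  end.

Definition connected (n : nat) (w : nat -> nat -> R) : Prop :=
  forall i j, (i < n)%nat -> (j < n)%nat ->
    exists p, is_walk n w i p /\ last p i = j.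

Definition IsGraphDist (n : nat) (w : nat -> nat -> R) (q : R) (i j : nat) (d : R) : Prop :=
  (exists p, is_walk n w i p /\ last p i = j /\ walk_len w q i p = d) /\
  (forall p, is_walk n w i p -> last p i = j -> d <= walk_len w q i p).

(* graph distance d^G_ij (the minimum, which exists on a connected finite graph) *)
Definition dG (n : nat) (w : nat -> nat -> R) (q : R) (i j : nat) : R :=
  epsilon (inhabits 0) (fun d => IsGraphDist n w q i j d).

Definition IsSetDist (n : nat) (w : nat -> nat -> R) (q : R) (T : nat -> Prop) (i : nat) (d : R) : Prop :=
  (exists j, (j < n)%nat /\ T j /\ d = dG n w q i j) /\
  (forall j, (j < n)%nat -> T j -> d <= dG n w q i j).

Definition dT (n : nat) (w : nat -> nat -> R) (q : R) (T : nat -> Prop) (i : nat) : R :=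
  epsilon (inhabits 0) (fun d => IsSetDist n w q T i d).

Definition Sigma (n : nat) (w : nat -> nat -> R) (S : nat -> bool) (i : nat) : Prop :=
  (i < n)%nat /\ exists j, (j < n)%nat /\ 0 < w i j /\ S i <> S j.

Definition sd (n : nat) (w : nat -> nat -> R) (q : R) (S : nat -> bool) (i : nat) : R :=
  ((1 - chi S i) - chi S i) * dT n w q (Sigma n w S) i.

Definition Fobj (n : nat) (w : nat -> nat -> R) (q r dt : R) (S : nat -> bool) (u : nat -> R) : R :=
  TVa n w q u + / dt * innerV n w r u (sd n w q S).

Definition inBox (n : nat) (m : R) (u : nat -> R) : Prop :=
  forall i, (i < n)%nat -> - m <= u i <= m.

Definition IsMinimizer (n : nat) (w : nat -> nat -> R) (q r dt m : R) (S : nat -> bool) (u : nat -> R) : Prop :=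
  inBox n m u /\ forall v, inBox n m v -> Fobj n w q r dt S u <= Fobj n w q r dt S v.

Definition superlevel (u : nat -> R) (s : R) (i : nat) : bool :=
  if Rlt_dec s (u i) then true else false.

Definition calF (n : nat) (w : nat -> nat -> R) (q r dt : R) (Shat S : nat -> bool) : R :=
  TVa n w q (chi Shat) - TVa n w q (chi S)
  + / dt * innerV n w r (fun i => chi Shat i - chi S i)
                        (fun i => (chi Shat i - chi S i) * dT n w q (Sigma n w S) i).

(* Write Phi(u) = TV^q_a(u) + c <u, g>_V for a fixed weight g (here c = 1/dt
   and g = sd^{Sigma_n}), and G(E) = Phi(chi_E) for the induced set energy.
   For u with values in [-m, m], both terms of Phi are layer-cake integrals
   of their superlevel sets:  chi_{E(t)}(i) = [t < u_i], so
   |u_i - u_j| = int_{-m}^{m} |[t < u_i] - [t < u_j]| dt  and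
   u_i + m = int_{-m}^{m} [t < u_i] dt.  This gives the coarea identity
       int_{-m}^{m} G(E_u(t)) dt = Phi(u) + K,   K = c m <1, g>_V.
   Since G takes finitely many values it has a minimizing set Emin, hence
   Phi(u) + K >= 2m G(Emin) on the box, with equality for u = m chi_{Emin} - m
   chi_{V \ Emin}; this proves existence.  For a minimizer u and s in (-m, m),
   E_u(t) = E_u(s) for t in [s, s+e) with e > 0, so G(E_u(s)) > G(Emin) would
   make the integral strictly larger than 2m G(Emin).  Finally calF(., S_n)
   differs from G by a constant, so minimizing sets of G minimize calF. *)

From Stdlib Require Import Reals List Lra Lia.
From Coquelicot Require Import Coquelicot.
Open Scope R_scope.

Lemma sumV_ext n (f g : nat -> R) :
  (forall i, (i < n)%nat -> f i = g i) -> sumV n f = sumV n g.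
Proof.
  intros Hfg. unfold sumV.
  assert (Hin : forall i, In i (seq 0 n) -> f i = g i)
    by (intros i Hi; apply in_seq in Hi; apply Hfg; lia).
  induction (seq 0 n) as [|x l IH]; simpl; [reflexivity|].
  rewrite Hin by (left; reflexivity). f_equal. apply IH.
  intros i Hi. apply Hin. right. exact Hi.
Qed.

Lemma sumV_plus n (f g : nat -> R) :
  sumV n (fun i => f i + g i) = sumV n f + sumV n g.
Proof. unfold sumV. induction (seq 0 n) as [|x l IH]; simpl; [ring|]. rewrite IH. ring. Qed.

Lemma sumV_scal n k (f : nat -> R) : sumV n (fun i => k * f i) = k * sumV n f.
Proof. unfold sumV. induction (seq 0 n) as [|x l IH]; simpl; [ring|]. rewrite IH. ring. Qed.

Lemma is_RInt_Rplus (f g : R -> R) (a b If Ig : R) :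
  is_RInt f a b If -> is_RInt g a b Ig -> is_RInt (fun t => f t + g t) a b (If + Ig).
Proof. exact (is_RInt_plus f g a b If Ig). Qed.

Lemma is_RInt_Rscal (f : R -> R) (a b k If : R) :
  is_RInt f a b If -> is_RInt (fun t => k * f t) a b (k * If).
Proof. exact (is_RInt_scal f a b k If). Qed.

Lemma is_RInt_Rconst (a b c : R) : is_RInt (fun _ => c) a b ((b - a) * c).
Proof. exact (is_RInt_const a b c). Qed.

Lemma is_RInt_eq (f g : R -> R) (a b If Ig : R) :
  is_RInt f a b If -> (forall t, f t = g t) -> If = Ig -> is_RInt g a b Ig.
Proof. intros Hf Hfg <-. apply (is_RInt_ext f); auto. Qed.

Lemma is_RInt_sumV a b n (f : nat -> R -> R) (If : nat -> R) :
  (forall i, (i < n)%nat -> is_RInt (f i) a b (If i)) ->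
  is_RInt (fun t => sumV n (fun i => f i t)) a b (sumV n If).
Proof.
  intros Hf. unfold sumV.
  assert (Hin : forall i, In i (seq 0 n) -> is_RInt (f i) a b (If i))
    by (intros i Hi; apply in_seq in Hi; apply Hf; lia).
  induction (seq 0 n) as [|x l IH]; simpl.
  - apply (is_RInt_eq _ _ a b _ _ (is_RInt_Rconst a b 0)); [intros _; reflexivity|ring].
  - apply is_RInt_Rplus; [apply Hin; left; reflexivity|].
    apply IH. intros i Hi. apply Hin. right. exact Hi.
Qed.

Definition step (a t : R) : R := if Rlt_dec t a then 1 else 0.

Lemma chi_superlevel (u : nat -> R) t i : chi (superlevel u t) i = step (u i) t.
Proof. unfold chi, superlevel, step. destruct (Rlt_dec t (u i)); reflexivity. Qed.

Lemma is_RInt_step m a : - m <= a <= m -> is_RInt (step a) (- m) m (a + m).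
Proof.
  intros Ha.
  assert (Hlow : is_RInt (step a) (- m) a ((a - - m) * 1)).
  { apply (is_RInt_ext (fun _ => 1)); [|apply is_RInt_Rconst].
    intros t Ht. rewrite Rmin_left, Rmax_right in Ht by lra.
    unfold step. destruct (Rlt_dec t a); lra. }
  assert (Hhigh : is_RInt (step a) a m ((m - a) * 0)).
  { apply (is_RInt_ext (fun _ => 0)); [|apply is_RInt_Rconst].
    intros t Ht. rewrite Rmin_left, Rmax_right in Ht by lra.
    unfold step. destruct (Rlt_dec t a); lra. }
  replace (a + m) with ((a - - m) * 1 + (m - a) * 0) by ring.
  exact (is_RInt_Chasles _ _ _ _ _ _ Hlow Hhigh).
Qed.

(* Layer-cake for a difference:  int_{-m}^{m} |[t < a] - [t < b]| dt = |a - b|,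
   using |[t < a] - [t < b]| = [t < a] + [t < b] - 2 [t < min a b]. *)
Lemma is_RInt_step_dist m a b : - m <= a <= m -> - m <= b <= m ->
  is_RInt (fun t => Rabs (step a t - step b t)) (- m) m (Rabs (a - b)).
Proof.
  intros Ha Hb.
  assert (Hmin : - m <= Rmin a b <= m) by (unfold Rmin; destruct (Rle_dec a b); lra).
  apply (is_RInt_eq
    (fun t => step a t + step b t + -2 * step (Rmin a b) t) _ _ _
    ((a + m) + (b + m) + -2 * (Rmin a b + m))).
  - apply is_RInt_Rplus; [apply is_RInt_Rplus|apply is_RInt_Rscal];
      apply is_RInt_step; assumption.
  - intros t. unfold step, Rmin.
    destruct (Rle_dec a b), (Rlt_dec t a), (Rlt_dec t b);
      repeat match goal with |- context [Rlt_dec ?x ?y] => destruct (Rlt_dec x y) end;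
      try lra; unfold Rabs; destruct (Rcase_abs _); lra.
  - unfold Rmin, Rabs. destruct (Rle_dec a b), (Rcase_abs (a - b)); lra.
Qed.

(* A function of boolean predicates that only depends on their values below k
   (a function of subsets of {0, ..., k-1}) attains its minimum: induct on k,
   minimizing separately over the sets containing and avoiding k. *)
Lemma finite_set_function_min k (Psi : (nat -> bool) -> R) :
  (forall E E', (forall i, (i < k)%nat -> E i = E' i) -> Psi E = Psi E') ->
  exists Emin, forall E, Psi Emin <= Psi E.
Proof.
  revert Psi. induction k as [|k IH]; intros Psi HPsi.
  - exists (fun _ => true). intros E. right. apply HPsi. intros; lia.
  - set (upd (E : nat -> bool) b := fun i => if Nat.eqb i k then b else E i).
    assert (Hslice : forall b, exists Eb, forall E, Psi (upd Eb b) <= Psi (upd E b)).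
    { intros b. apply (IH (fun E => Psi (upd E b))). intros E E' HE. apply HPsi.
      intros i Hi. unfold upd. destruct (Nat.eqb_spec i k); auto. apply HE. lia. }
    destruct (Hslice true) as [E1 H1], (Hslice false) as [E0 H0].
    assert (Hupd : forall E, Psi E = Psi (upd E (E k))).
    { intros E. apply HPsi. intros i _. unfold upd. destruct (Nat.eqb_spec i k); subst; auto. }
    destruct (Rle_dec (Psi (upd E1 true)) (Psi (upd E0 false))) as [Hle|Hgt].
    + exists (upd E1 true). intros E. rewrite (Hupd E). destruct (E k).
      * apply H1.
      * eapply Rle_trans; [exact Hle|apply H0].
    + exists (upd E0 false). intros E. rewrite (Hupd E). destruct (E k).
      * eapply Rle_trans; [|apply H1]. lra.
      * apply H0.
Qed.

Lemma gap_above_level (u : nat -> R) k s m : s < m ->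
  exists e, 0 < e <= m - s /\ forall i, (i < k)%nat -> s < u i -> s + e <= u i.
Proof.
  intros Hs. induction k as [|k [e [He Hgap]]].
  - exists (m - s). split; [lra|intros; lia].
  - destruct (Rlt_dec s (u k)) as [Hk|Hk].
    + exists (Rmin e (u k - s)).
      pose proof (Rmin_l e (u k - s)). pose proof (Rmin_r e (u k - s)).
      split; [split; [apply Rmin_glb_lt|]; lra|].
      intros i Hi Hsi. destruct (Nat.eq_dec i k) as [->|Hne]; [lra|].
      pose proof (Hgap i ltac:(lia) Hsi). lra.
    + exists e. split; [lra|]. intros i Hi Hsi.
      destruct (Nat.eq_dec i k) as [->|Hne]; [lra|]. apply Hgap; auto; lia.
Qed.

Lemma superlevel_locally_constant (u : nat -> R) k s m : s < m ->
  exists e, 0 < e <= m - s /\ forall t, s <= t < s + e ->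
    forall i, (i < k)%nat -> superlevel u t i = superlevel u s i.
Proof.
  intros Hs. destruct (gap_above_level u k s m Hs) as [e [He Hgap]].
  exists e. split; [exact He|]. intros t Ht i Hi. unfold superlevel.
  destruct (Rlt_dec s (u i)) as [Hsi|Hsi], (Rlt_dec t (u i)); auto.
  - pose proof (Hgap i Hi Hsi). lra.
  - lra.
Qed.

Section Coarea.

Variables (n : nat) (w : nat -> nat -> R) (q r c : R) (g : nat -> R).

Definition Phi (u : nat -> R) : R := TVa n w q u + c * innerV n w r u g.

Definition setEnergy (E : nat -> bool) : R := Phi (chi E).

Lemma Phi_ext u v : (forall i, (i < n)%nat -> u i = v i) -> Phi u = Phi v.
Proof.
  intros Huv. unfold Phi, TVa, innerV.
  rewrite (sumV_ext n (fun i => u i * g i * _) (fun i => v i * g i * _))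
    by (intros i Hi; rewrite Huv; auto).
  do 2 f_equal. apply sumV_ext; intros i Hi. apply sumV_ext; intros j Hj.
  rewrite !Huv; auto.
Qed.

Lemma setEnergy_ext E E' :
  (forall i, (i < n)%nat -> E i = E' i) -> setEnergy E = setEnergy E'.
Proof. intros HE. apply Phi_ext. intros i Hi. unfold chi. rewrite HE; auto. Qed.

Definition inner_one : R := innerV n w r (fun _ => 1) g.

Lemma coarea m u : inBox n m u ->
  is_RInt (fun t => setEnergy (superlevel u t)) (- m) m (Phi u + c * m * inner_one).
Proof.
  intros Hu. unfold setEnergy, Phi, TVa, inner_one, innerV.
  apply (is_RInt_eq
    (fun t => / 2 * sumV n (fun i => sumV n (fun j =>
                wpow w q i j * Rabs (step (u i) t - step (u j) t)))
              + c * sumV n (fun i => (g i * Rpower (deg n w i) r) * step (u i) t)) _ _ _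
    (/ 2 * sumV n (fun i => sumV n (fun j => wpow w q i j * Rabs (u i - u j)))
     + c * sumV n (fun i => (g i * Rpower (deg n w i) r) * (u i + m)))).
  - apply is_RInt_Rplus; apply is_RInt_Rscal; apply is_RInt_sumV; intros i Hi.
    + apply is_RInt_sumV; intros j Hj. apply is_RInt_Rscal.
      apply is_RInt_step_dist; auto.
    + apply is_RInt_Rscal. apply is_RInt_step; auto.
  - intros t. f_equal; f_equal.
    + apply sumV_ext; intros i _. apply sumV_ext; intros j _.
      rewrite !chi_superlevel. reflexivity.
    + apply sumV_ext; intros i _. rewrite chi_superlevel. ring.
  - rewrite Rplus_assoc, (Rmult_assoc c m), <- Rmult_plus_distr_l,
      <- (sumV_scal n m), <- sumV_plus. do 2 f_equal.
    apply sumV_ext; intros i _. ring.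
Qed.

Variables (m : R) (Hm : 0 < m).

Lemma setEnergy_has_min : exists Emin, forall E, setEnergy Emin <= setEnergy E.
Proof. apply (finite_set_function_min n). exact setEnergy_ext. Qed.

Lemma coarea_lower_bound Emin u :
  (forall E, setEnergy Emin <= setEnergy E) -> inBox n m u ->
  (m - - m) * setEnergy Emin <= Phi u + c * m * inner_one.
Proof.
  intros HEmin Hu.
  apply (is_RInt_le (fun _ => setEnergy Emin) (fun t => setEnergy (superlevel u t))
           (- m) m); [lra|apply is_RInt_Rconst|apply coarea; exact Hu|].
  intros t _. apply HEmin.
Qed.

Definition binary (E : nat -> bool) (i : nat) : R := if E i then m else - m.

Lemma binary_inBox E : inBox n m (binary E).
Proof. intros i _. unfold binary. destruct (E i); lra. Qed.

(* The superlevel sets of binary E at interior levels all equal E, so the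
   coarea bound is attained by binary E. *)
Lemma coarea_binary E :
  Phi (binary E) + c * m * inner_one = (m - - m) * setEnergy E.
Proof.
  rewrite <- (is_RInt_unique _ _ _ _ (coarea m (binary E) (binary_inBox E))).
  apply is_RInt_unique.
  apply (is_RInt_ext (fun _ => setEnergy E)); [|apply is_RInt_Rconst].
  intros t Ht. rewrite Rmin_left, Rmax_right in Ht by lra.
  apply setEnergy_ext. intros i _. unfold superlevel, binary.
  destruct (E i), (Rlt_dec t _); auto; lra.
Qed.

(* Level sets of a minimizer are minimal: otherwise, on the interval
   [s, s+e) where the superlevel set is constant, the integrand of the coarea
   identity would exceed the minimal energy by a fixed amount, so the binary
   function built from a minimal set would do strictly better. *)
Lemma minimizer_level_set_minimal Emin u s :
  (forall E, setEnergy Emin <= setEnergy E) -> inBox n m u ->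
  (forall v, inBox n m v -> Phi u <= Phi v) -> - m < s < m ->
  setEnergy (superlevel u s) <= setEnergy Emin.
Proof.
  intros HEmin Hu Humin Hs.
  destruct (Rle_dec (setEnergy (superlevel u s)) (setEnergy Emin)) as [Hle|Hgt];
    [exact Hle|exfalso; apply Rnot_le_lt in Hgt].
  set (gap := setEnergy (superlevel u s) - setEnergy Emin).
  destruct (superlevel_locally_constant u n s m (proj2 Hs)) as [e [He Hconst]].
  assert (Hbelow : (m - - m) * setEnergy Emin + gap * ((s + e + m) + -1 * (s + m))
                   <= Phi u + c * m * inner_one).
  { apply (is_RInt_le (fun t => setEnergy Emin + gap * (step (s + e) t + -1 * step s t))
             (fun t => setEnergy (superlevel u t)) (- m) m);
      [lra| |apply coarea; exact Hu|].
    - apply is_RInt_Rplus; [apply is_RInt_Rconst|apply is_RInt_Rscal].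
      apply is_RInt_Rplus; [|apply is_RInt_Rscal]; apply is_RInt_step; lra.
    - intros t _. pose proof (HEmin (superlevel u t)). unfold step.
      destruct (Rlt_dec t (s + e)), (Rlt_dec t s); try lra.
      rewrite (setEnergy_ext (superlevel u t) (superlevel u s)); [unfold gap; lra|].
      apply Hconst; lra. }
  pose proof (Humin _ (binary_inBox Emin)). pose proof (coarea_binary Emin).
  assert (0 < gap * e) by (apply Rmult_lt_0_compat; unfold gap; lra).
  lra.
Qed.

End Coarea.

(* calF(., S_n) is the set energy for c = 1/dt and g = sd^{Sigma_n}, up to a
   constant: expanding (chi_E - chi_S)^2 d^Sigma gives chi_E sd + chi_S d^Sigma. *)
Lemma calF_setEnergy n w q r dt S E :
  calF n w q r dt E S =
  setEnergy n w q r (/ dt) (sd n w q S) E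
  + (- TVa n w q (chi S)
     + / dt * innerV n w r (chi S) (fun i => chi S i * dT n w q (Sigma n w S) i)).
Proof.
  unfold calF, setEnergy, Phi, innerV.
  rewrite (sumV_ext n _ (fun i => chi E i * sd n w q S i * Rpower (deg n w i) r
    + chi S i * (chi S i * dT n w q (Sigma n w S) i) * Rpower (deg n w i) r)).
  - rewrite sumV_plus. ring.
  - intros i _. unfold sd, chi. destruct (E i), (S i); ring.
Qed.

Theorem mainTheorem9
  (n : nat) (w : nat -> nat -> R) (r q : R)
  (Hr : 0 <= r <= 1) (Hq : / 2 <= q <= 1)
  (Hsym : forall i j, (i < n)%nat -> (j < n)%nat -> w i j = w j i)
  (Hnonneg : forall i j, (i < n)%nat -> (j < n)%nat -> 0 <= w i j)
  (Hdiag : forall i, (i < n)%nat -> w i i = 0)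
  (Hdeg : forall i, (i < n)%nat -> 0 < deg n w i)
  (Hconn : connected n w)
  (S : nat -> bool)
  (HSne : exists i, (i < n)%nat /\ S i = true)
  (HSnV : exists i, (i < n)%nat /\ S i = false)
  (dt m : R) (Hdt : 0 < dt) (Hm : 0 < m) :
  (exists u, IsMinimizer n w q r dt m S u) /\
  (forall u, IsMinimizer n w q r dt m S u ->
     forall s, - m < s < m ->
       forall Shat : nat -> bool,
         calF n w q r dt (superlevel u s) S <= calF n w q r dt Shat S).
Proof.
  set (g := sd n w q S).
  destruct (setEnergy_has_min n w q r (/ dt) g) as [Emin HEmin].
  split.
  - exists (binary m Emin). split; [apply binary_inBox; exact Hm|].
    intros v Hv.
    pose proof (coarea_lower_bound n w q r (/ dt) g m Hm Emin v HEmin Hv).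
    pose proof (coarea_binary n w q r (/ dt) g m Hm Emin).
    unfold Fobj. fold g. unfold Phi in *. lra.
  - intros u [Hu Humin] s Hs Shat.
    rewrite !calF_setEnergy. apply Rplus_le_compat_r.
    apply Rle_trans with (setEnergy n w q r (/ dt) g Emin); [|apply HEmin].
    apply (minimizer_level_set_minimal n w q r (/ dt) g m Hm); auto.
Qed.
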